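(* Each of the functions $\theta\mapsto\mathbf{u}'(\theta)\cdot\mathbf{u}(\theta)$ and $\theta\mapsto\mathbf{v}'(\theta)\cdot\mathbf{v}(\theta)$ is either strictly positive on all of $(\theta^-,\theta^+)$ or strictly negative on all of $(\theta^-,\theta^+)$. Consequently $|\mathbf{u}(\theta)|$ and $|\mathbf{v}(\theta)|$ are strictly monotonic on $(\theta^-,\theta^+)$.
   Context: Design and mechanism parameterization. Fix $\mathbf{t}_1^r,\dots,\mathbf{t}_4^r\in\mathbb{R}^3$ with $\mathbf{t}_i^r\cdot(\mathbf{t}_j^r\times\mathbf{t}_k^r)\neq0$ for $ijk\in\{123,234,341,412\}$, $\mathrm{conv}\{\mathbf{0},\mathbf{t}_1^r,\mathbf{t}_2^r\}\cap\mathrm{conv}\{\mathbf{0},\mathbf{t}_3^r,\mathbf{t}_4^r\}=\{\mathbf{0}\}$, $\mathrm{conv}\{\mathbf{0},\mathbf{t}_1^r,\mathbf{t}_4^r\}\cap\mathrm{conv}\{\mathbf{0},\mathbf{t}_2^r,\mathbf{t}_3^r\}=\{\mathbf{0}\}$, and $\mathbf{u}_0:=\mathbf{t}_1^r-\mathbf{t}_3^r$, $\mathbf{v}_0:=\mathbf{t}_2^r-\mathbf{t}_4^r$ with $\mathbf{u}_0\cdot\mathbf{e}_3=\mathbf{v}_0\cdot\mathbf{e}_3=0$, $\mathbf{e}_3\cdot(\mathbf{u}_0\times\mathbf{v}_0)>0$. For nonzero $\mathbf{t}$ let $\mathbf{R}_{\mathbf{t}}(\varphi):=|\mathbf{t}|^{-2}\mathbf{t}\otimes\mathbf{t}+\cos\varphi(\mathbf{I}-|\mathbf{t}|^{-2}\mathbf{t}\otimes\mathbf{t})+|\mathbf{t}|^{-1}\sin\varphi(\mathbf{t}\times)$.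 Set $\mathbf{t}_2^d(\gamma):=\mathbf{R}_{\mathbf{t}_1^r}(\gamma)\mathbf{t}_2^r$, $\mathbf{t}_3^d(\theta):=\mathbf{R}_{\mathbf{t}_4^r}(\theta)\mathbf{t}_3^r$. $(\theta^-,\theta^+)$ is the maximal open interval containing $0$ on which there is a unique $C^1$ function $\gamma$ with $\gamma(0)=0$, $\mathbf{t}_2^d(\gamma(\theta))\cdot\mathbf{t}_3^d(\theta)=\mathbf{t}_2^r\cdot\mathbf{t}_3^r$ and with the four triple products of $(\mathbf{t}_1^r,\mathbf{t}_2^d(\gamma(\theta)),\mathbf{t}_3^d(\theta),\mathbf{t}_4^r)$ indexed by $ijk\in\{123,234,341,412\}$ having the same signs as those of $(\mathbf{t}_1^r,\dots,\mathbf{t}_4^r)$; $\gamma$ is analytic. Fix an analytic $\mathbf{R}_0:(\theta^-,\theta^+)\to SO(3)$ with $\mathbf{R}_0(0)=\mathbf{I}$ such that $\mathbf{t}_1(\theta):=\mathbf{R}_0(\theta)\mathbf{t}_1^r$, $\mathbf{t}_2(\theta):=\mathbf{R}_0(\theta)\mathbf{t}_2^d(\gamma(\theta))$, $\mathbf{t}_3(\theta):=\mathbf{R}_0(\theta)\mathbf{t}_3^d(\theta)$, $\mathbf{t}_4(\theta):=\mathbf{R}_0(\theta)\mathbf{t}_4^r$ give $\mathbf{u}(\theta):=\mathbf{t}_1(\theta)-\mathbf{t}_3(\theta)$, $\mathbf{v}(\theta):=\mathbf{t}_2(\theta)-\mathbf{t}_4(\theta)$ with $\mathbf{e}_3\cdot\mathbf{u}=\mathbf{e}_3\cdot\mathbf{v}=0$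 and $\mathbf{e}_3\cdot(\mathbf{u}\times\mathbf{v})>0$. Primes denote $d/d\theta$. *)

From mathcomp Require Import all_boot all_algebra all_classical all_reals all_analysis.
Import GRing.Theory Num.Theory numFieldTopology.Exports numFieldNormedType.Exports.
Set Implicit Arguments. Unset Strict Implicit. Unset Printing Implicit Defensive.
Local Open Scope ring_scope.
Local Open Scope classical_set_scope.

Section Defs.
Variable R : realType.
Notation vec := 'cV[R]_3.

Definition cx (v : vec) : R := v (inord 0) 0.
Definition cy (v : vec) : R := v (inord 1) 0.
Definition cz (v : vec) : R := v (inord 2) 0.

Definition dotp (u v : vec) : R := \sum_(i < 3) u i 0 * v i 0.
Definition crossp (u v : vec) : vec :=
  \col_(i < 3) (if i == inord 0 then cy u * cz v - cz u * cy v
               else if i == inord 1 then cz u * cx v - cx u * cz v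
               else cx u * cy v - cy u * cx v).
Definition vnorm (v : vec) : R := Num.sqrt (dotp v v).
Definition triple (a b c : vec) : R := dotp a (crossp b c).

Definition e3 : vec := \col_(i < 3) (if i == inord 2 then 1 else 0).

Definition crossmx (t : vec) : 'M[R]_3 := \matrix_(i < 3, j < 3)
  (crossp t (\col_(k < 3) (if k == j then 1 else 0))) i 0.

Definition rotR (t : vec) (phi : R) : 'M[R]_3 :=
  (vnorm t ^- 2) *: (t *m t^T)
  + cos phi *: (1%:M - (vnorm t ^- 2) *: (t *m t^T))
  + (vnorm t)^-1 * sin phi *: crossmx t.

Definition isSO3 (M : 'M[R]_3) : Prop := M^T *m M = 1%:M /\ \det M = 1.

Definition conv3 (a b c : vec) : set vec :=
  [set x | exists l1 l2 l3 : R, 0 <= l1 /\ 0 <= l2 /\ 0 <= l3 /\ l1 + l2 + l3 = 1 /\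
           x = l1 *: a + l2 *: b + l3 *: c].

Definition open_itv0 (I : set R) : Prop :=
  open I /\ I 0 /\ (forall x y z, I x -> I z -> x <= y -> y <= z -> I y).

Definition C1_on (I : set R) (f : R -> R) : Prop :=
  (forall x, I x -> derivable f x 1) /\
  (forall x, I x -> {for x, continuous (derive1 f)}).

Definition sign_pattern (a1 a2 a3 a4 : vec) : R * R * R * R :=
  (Num.sg (triple a1 a2 a3), Num.sg (triple a2 a3 a4),
   Num.sg (triple a3 a4 a1), Num.sg (triple a4 a1 a2)).

Section Mechanism.
Variables t1r t2r t3r t4r : vec.

Definition t2d (g : R) : vec := rotR t1r g *m t2r.
Definition t3d (th : R) : vec := rotR t4r th *m t3r.

Definition admissible (I : set R) (g : R -> R) : Prop :=
  C1_on I g /\ g 0 = 0 /\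
  (forall th, I th ->
     dotp (t2d (g th)) (t3d th) = dotp t2r t3r /\
     sign_pattern t1r (t2d (g th)) (t3d th) t4r = sign_pattern t1r t2r t3r t4r).

Definition unique_admissible (I : set R) : Prop :=
  (exists g, admissible I g) /\
  (forall g1 g2, admissible I g1 -> admissible I g2 -> forall th, I th -> g1 th = g2 th).

(* I = (theta^-, theta^+) is the maximal open interval containing 0
   on which there is a unique admissible gamma *)
Definition maximal_interval (I : set R) : Prop :=
  open_itv0 I /\ unique_admissible I /\
  (forall J, open_itv0 J -> unique_admissible J -> J `<=` I).
End Mechanism.

Definition analytic_on (I : set R) (f : R -> R) : Prop :=
  forall x0, I x0 -> exists r : R, 0 < r /\ exists c : nat -> R,
    forall x, I x -> `|x - x0| < r ->
      (fun n : nat => \sum_(0 <= k < n) c k * (x - x0) ^+ k) @ \oo --> f x.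

Definition mx_analytic_on (I : set R) (M : R -> 'M[R]_3) : Prop :=
  forall i j : 'I_3, analytic_on I (fun th => M th i j).

Definition strictly_monotonic_on (I : set R) (f : R -> R) : Prop :=
  (forall x y, I x -> I y -> x < y -> f x < f y) \/
  (forall x y, I x -> I y -> x < y -> f y < f x).

Definition const_sign_on (I : set R) (f : R -> R) : Prop :=
  (forall x, I x -> 0 < f x) \/ (forall x, I x -> f x < 0).

End Defs.
Arguments e3 {R}.

(* In the frame rotating with R0, u and v become w_u := t1 - R_t4(th) t3 and
   w_v := R_t1(gamma th) t2 - t4, and u'.u = w_u'.w_u, v'.v = w_v'.w_v since R0 is orthogonal.
   As d/dphi R_t(phi) x = |t|^-1 t x R_t(phi) x,
     w_u'.w_u = |t4|^-1 [t3d, t4, t1]   and   w_v'.w_v = - gamma' |t1|^-1 [t4, t1, t2d],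
   while differentiating the constraint t2d . t3d = t2 . t3 gives
     gamma' |t1|^-1 [t1, t2d, t3d] = |t4|^-1 [t2d, t3d, t4].
   The triple products keep the signs they have in the reference configuration, so both
   speeds have constant sign, and the mean value theorem makes |u|^2 and |v|^2 strictly
   monotonic. Analyticity of R0 is only used for differentiability. *)

From mathcomp Require Import all_boot all_algebra all_classical all_reals all_analysis.
From mathcomp Require Import ring lra order.
Import Order.TTheory GRing.Theory Num.Theory numFieldTopology.Exports numFieldNormedType.Exports.
Local Open Scope ring_scope.
Local Open Scope classical_set_scope.
Set Implicit Arguments. Unset Strict Implicit.

Section Vec3.
Variable R : realType.
Notation vec := 'cV[R]_3.
Implicit Types (a b c : vec) (k : R).

Lemma inord_eq (n i j : nat) : (i <= n)%N -> (j <= n)%N ->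
  (inord i == inord j :> 'I_n.+1) = (i == j).
Proof. by move=> ilen jlen; rewrite -val_eqE /= !inordK. Qed.

Lemma sum_ord3 (F : 'I_3 -> R) :
  \sum_(i < 3) F i = F (inord 0) + F (inord 1) + F (inord 2).
Proof.
rewrite !big_ord_recr big_ord0 /= add0r.
by congr (F _ + F _ + F _); apply: val_inj; rewrite /= inordK.
Qed.

Lemma vecP a b : cx a = cx b -> cy a = cy b -> cz a = cz b -> a = b.
Proof.
move=> ex ey ez; apply/matrixP => -[[|[|[|//]]] i3] j; rewrite [j]ord1;
  [move: ex | move: ey | move: ez]; rewrite /cx /cy /cz;
  by congr (_ = _); congr (_ _ _); apply: val_inj; rewrite /= inordK.
Qed.

Lemma cxD a b : cx (a + b) = cx a + cx b. Proof. by rewrite /cx mxE. Qed.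
Lemma cyD a b : cy (a + b) = cy a + cy b. Proof. by rewrite /cy mxE. Qed.
Lemma czD a b : cz (a + b) = cz a + cz b. Proof. by rewrite /cz mxE. Qed.
Lemma cxN a : cx (- a) = - cx a. Proof. by rewrite /cx mxE. Qed.
Lemma cyN a : cy (- a) = - cy a. Proof. by rewrite /cy mxE. Qed.
Lemma czN a : cz (- a) = - cz a. Proof. by rewrite /cz mxE. Qed.
Lemma cxZ k a : cx (k *: a) = k * cx a. Proof. by rewrite /cx mxE. Qed.
Lemma cyZ k a : cy (k *: a) = k * cy a. Proof. by rewrite /cy mxE. Qed.
Lemma czZ k a : cz (k *: a) = k * cz a. Proof. by rewrite /cz mxE. Qed.

Lemma dotpE a b : dotp a b = cx a * cx b + cy a * cy b + cz a * cz b.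
Proof. by rewrite /dotp sum_ord3. Qed.

Lemma crossp_cx a b : cx (crossp a b) = cy a * cz b - cz a * cy b.
Proof. by rewrite /cx mxE eqxx. Qed.

Lemma crossp_cy a b : cy (crossp a b) = cz a * cx b - cx a * cz b.
Proof. by rewrite /cy mxE !inord_eq. Qed.

Lemma crossp_cz a b : cz (crossp a b) = cx a * cy b - cy a * cx b.
Proof. by rewrite /cz mxE !inord_eq. Qed.

Definition coordE :=
  (cxD, cyD, czD, cxN, cyN, czN, cxZ, cyZ, czZ, crossp_cx, crossp_cy, crossp_cz).

Lemma tripleE a b c : triple a b c =
  cx a * (cy b * cz c - cz b * cy c) + cy a * (cz b * cx c - cx b * cz c)
  + cz a * (cx b * cy c - cy b * cx c).
Proof. by rewrite /triple dotpE crossp_cx crossp_cy crossp_cz. Qed.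

Lemma dotpC a b : dotp a b = dotp b a.
Proof. by rewrite !dotpE; ring. Qed.

Lemma dotpZl k a b : dotp (k *: a) b = k * dotp a b.
Proof. by rewrite !dotpE !coordE; ring. Qed.

Lemma dotpNl a b : dotp (- a) b = - dotp a b.
Proof. by rewrite !dotpE !coordE; ring. Qed.

Lemma dotp_ge0 a : 0 <= dotp a a.
Proof. by rewrite dotpE -!expr2 !addr_ge0 ?sqr_ge0. Qed.

Lemma vnorm_sqr a : vnorm a ^+ 2 = dotp a a.
Proof. by rewrite sqr_sqrtr ?dotp_ge0. Qed.

Lemma vnorm_gt0 a : dotp a a != 0 -> 0 < vnorm a.
Proof. by move=> a0; rewrite sqrtr_gt0 lt_def a0 dotp_ge0. Qed.

Lemma dotp_mx a b : dotp a b = (a^T *m b) 0 0.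
Proof. by rewrite mxE; apply: eq_bigr => i _; rewrite mxE. Qed.

Lemma dotp_orthmx (M : 'M[R]_3) a : M^T *m M = 1%:M -> dotp (M *m a) (M *m a) = dotp a a.
Proof. by move=> MTM; rewrite !dotp_mx trmx_mul -mulmxA (mulmxA M^T) MTM mul1mx. Qed.

Lemma triple_neq0 a b c : triple a b c != 0 ->
  [/\ dotp a a != 0, dotp b b != 0 & dotp c c != 0].
Proof.
have sq0 (y : vec) : dotp y y = 0 -> [/\ cx y = 0, cy y = 0 & cz y = 0].
  rewrite dotpE => y0; have := sqr_ge0 (cx y); have := sqr_ge0 (cy y).
  have := sqr_ge0 (cz y); rewrite !expr2 => z0 y0' x0.
  by split; apply/eqP; rewrite -[_ == 0]orbb -mulf_eq0; apply/eqP; lra.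
move=> abc; split; apply: contra_neq abc; rewrite tripleE => /sq0[-> -> ->]; ring.
Qed.

End Vec3.

Section Rotation.
Variable R : realType.
Notation vec := 'cV[R]_3.
Implicit Types (t x : vec) (phi : R).

Lemma mulmx3E (M : 'M[R]_3) x i :
  (M *m x) i 0 = M i (inord 0) * cx x + M i (inord 1) * cy x + M i (inord 2) * cz x.
Proof. by rewrite mxE sum_ord3. Qed.

Lemma rotR_mulmxE t x phi : let p := (dotp t x / dotp t t) *: t in
  rotR t phi *m x = p + cos phi *: (x - p) + (sin phi / vnorm t) *: crossp t x.
Proof.
rewrite /= /rotR vnorm_sqr.
have ord0E : ord0 = 0 :> 'I_1 by [].
apply: vecP; rewrite /cx /cy /cz !mulmx3E !mxE !big_ord1 !mxE !dotpE /cx /cy /cz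
  !ord0E !mxE !inord_eq //=; ring.
Qed.

Lemma crossp_rotR t x phi : dotp t t != 0 ->
  let p := (dotp t x / dotp t t) *: t in
  (vnorm t)^-1 *: crossp t (rotR t phi *m x) =
  - sin phi *: (x - p) + (cos phi / vnorm t) *: crossp t x.
Proof.
move=> t0 p; rewrite rotR_mulmxE -/p.
set k := (vnorm t)^-1; have kk : k * k = (dotp t t)^-1.
  by rewrite -expr2 exprVn vnorm_sqr.
have -> : crossp t (p + cos phi *: (x - p) + (sin phi * k) *: crossp t x) =
    cos phi *: crossp t x + (sin phi * k) *: (dotp t x *: t - dotp t t *: x).
  by apply: vecP; rewrite /p !coordE !dotpE; ring.
rewrite scalerDr !scalerA mulrCA kk.
by apply: vecP; rewrite /p !coordE; field.
Qed.

End Rotation.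

Section VectorDerivative.
Variable R : realType.
Notation vec := 'cV[R]_3.
Implicit Types (f g : R -> R) (x : R).

Lemma is_derive1_comp f g x df dg : is_derive x 1 f df -> is_derive (f x) 1 g dg ->
  is_derive x 1 (g \o f) (dg * df).
Proof.
move=> fd gd; have [fx _] := fd; have [gfx _] := gd; apply: DeriveDef.
  by apply/derivable1_diffP/differentiable_comp; apply/derivable1_diffP.
by rewrite -derive1E derive1_comp // !derive1E !derive_val.
Qed.

Lemma is_derive_trig (a b c th : R) :
  is_derive th 1 (fun y => a + cos y * b + sin y * c) (cos th * c - sin th * b).
Proof.
have := is_deriveD (is_deriveD (is_derive_cst a th 1)
  (is_deriveM (is_derive_cos th) (is_derive_cst b th 1)))
  (is_deriveM (is_derive_sin th) (is_derive_cst c th 1)).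
by move/is_derive_eq; apply; rewrite /GRing.scale /=; ring.
Qed.

Definition is_derive_cv (u : R -> vec) x (du : vec) : Prop :=
  forall i, is_derive x 1 (fun y => u y i 0) (du i 0).

Lemma is_derive_cv_cst (a : vec) x : is_derive_cv (fun=> a) x 0.
Proof. by move=> i; rewrite mxE; exact: is_derive_cst. Qed.

Lemma is_derive_cvB (u w : R -> vec) x du dw :
  is_derive_cv u x du -> is_derive_cv w x dw ->
  is_derive_cv (fun y => u y - w y) x (du - dw).
Proof.
move=> ud wd i; rewrite !mxE.
by under eq_fun do rewrite !mxE; exact: is_deriveB (ud i) (wd i).
Qed.

Lemma is_derive_cv_comp (u : R -> vec) g x du dg :
  is_derive x 1 g dg -> is_derive_cv u (g x) du -> is_derive_cv (u \o g) x (dg *: du).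
Proof. by move=> gd ud i; rewrite mxE mulrC; exact: is_derive1_comp gd (ud i). Qed.

Lemma derive1_cv (u : R -> vec) x du : is_derive_cv u x du -> derive1 u x = du.
Proof.
move=> ud; have ux : derivable u x 1.
  by apply/derivable_mxP => i j; rewrite [j]ord1; case: (ud i).
rewrite derive1E derive_mx //; apply/matrixP => i j; rewrite mxE [j]ord1.
by case: (ud i).
Qed.

Lemma is_derive_dotp (u w : R -> vec) x du dw :
  is_derive_cv u x du -> is_derive_cv w x dw ->
  is_derive x 1 (fun y => dotp (u y) (w y)) (dotp du (w x) + dotp (u x) dw).
Proof.
move=> ud wd; under eq_fun do rewrite dotpE.
apply: is_derive_eq; first exact: is_deriveD (is_deriveD
  (is_deriveM (ud _) (wd _)) (is_deriveM (ud _) (wd _))) (is_deriveM (ud _) (wd _)).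
by rewrite !dotpE /cx /cy /cz /GRing.scale /=; ring.
Qed.

Lemma is_derive_cv_mulmx (M : R -> 'M[R]_3) (w : R -> vec) x (dM : 'M[R]_3) dw :
  (forall i j, is_derive x 1 (fun y => M y i j) (dM i j)) -> is_derive_cv w x dw ->
  is_derive_cv (fun y => M y *m w y) x (dM *m w x + M x *m dw).
Proof.
move=> Md wd i; under eq_fun do rewrite mulmx3E.
apply: is_derive_eq; first exact: is_deriveD (is_deriveD
  (is_deriveM (Md _ _) (wd _)) (is_deriveM (Md _ _) (wd _))) (is_deriveM (Md _ _) (wd _)).
by rewrite mxE !mulmx3E /cx /cy /cz /GRing.scale /=; ring.
Qed.

Lemma is_derive_cv_rotR (t x : vec) th : dotp t t != 0 ->
  is_derive_cv (fun phi => rotR t phi *m x) th ((vnorm t)^-1 *: crossp t (rotR t th *m x)).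
Proof.
move=> t0 i; rewrite crossp_rotR //=; set p := (_ / _) *: t.
have -> : (fun phi => (rotR t phi *m x) i 0) =
    (fun y => p i 0 + cos y * (x - p) i 0 + sin y * (crossp t x i 0 / vnorm t)).
  by apply/funext => y; rewrite rotR_mulmxE -/p !mxE; ring.
by apply: is_derive_eq (is_derive_trig _ _ _ _) _; rewrite !mxE; ring.
Qed.

End VectorDerivative.

Section AnalyticDerivable.
Variable R : realType.

Lemma is_cvg_pseries_diffs (c : R^nat) (K : R) : 0 < K ->
  cvgn (pseries c K) -> cvgn (pseries (pseries_diffs c) (K / 4)).
Proof.
move=> K0 cK; have K_ge0 := ltW K0; have [B [_ cKB]] := cvg_series_bounded cK.
pose B' : R := `|B| + 1.
have B'0 : 0 < B' by rewrite ltr_wpDl.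
have cK_le n : `|c n * K ^+ n| <= B'.
  by apply: cKB => //; rewrite (le_lt_trans (ler_norm B)) // ltrDl.
apply: normed_cvg; apply: (@series_le_cvg _ _ (geometric (B' * 2 / K) 2^-1)) => //.
- by move=> n /=.
- by move=> n; rewrite /geometric /= mulr_ge0 ?exprn_ge0 ?divr_ge0 ?mulr_ge0 ?invr_ge0 ?ltW.
- (* (n+1) |c (n+1)| (K/4)^n <= (n+1) 4^-n B'/K <= 2^-n (2 B'/K) *)
  move=> n; rewrite /pseries_diffs /geometric /= !normrM normr_nat !normrX.
  rewrite [`|K / 4|]ger0_norm ?divr_ge0 //.
  have Kn0 : 0 < K ^+ n.+1 by rewrite exprn_gt0.
  have cn : `|c n.+1| <= B' / K ^+ n.+1.
    by rewrite ler_pdivlMr // -(ger0_norm (ltW Kn0)) -normrM cK_le.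
  apply: le_trans (ler_wpM2r _ (ler_wpM2l _ cn)) _; rewrite ?exprn_ge0 ?divr_ge0 //.
  have n2n : n.+1%:R <= 2 * 2 ^+ n :> R.
    by rewrite -exprS -natrX ler_nat; exact: ltnW (ltn_expl _ _).
  set a := B' / K * 2^-1 ^+ n * 2^-1 ^+ n.
  have a0 : 0 <= a by rewrite !mulr_ge0 ?exprn_ge0 ?divr_ge0 ?invr_ge0 ?ltW.
  have -> : n.+1%:R * (B' / K ^+ n.+1) * (K / 4) ^+ n = n.+1%:R * a.
    rewrite /a exprS !exprMn !exprVn (_ : 4 = 2 * 2 :> R) ?exprMn; last by lra.
    by field; rewrite !expf_neq0 // lt0r_neq0.
  have -> : B' * 2 / K * 2^-1 ^+ n = 2 * 2 ^+ n * a.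
    by rewrite /a exprVn; field; rewrite expf_neq0 // lt0r_neq0.
  exact: ler_wpM2r.
- by apply: is_cvg_geometric_series; rewrite ger0_norm ?invr_ge0 ?invf_lt1 //; lra.
Qed.

Lemma pseries_derivable0 (c : R^nat) (K : R) : 0 < K -> cvgn (pseries c K) ->
  derivable (fun y => limn (pseries c y)) 0 1.
Proof.
move=> K0 cK; have K4 : 0 < K / 4 by rewrite divr_gt0.
have dK := is_cvg_pseries_diffs K0 cK.
have ddK := is_cvg_pseries_diffs K4 dK.
(* pseries_snd_diffs wants the series and its first two derived series to converge at a
   common radius, and K/16 is one. *)
have K16 : `|K / 4 / 4| < `|K| by rewrite !gtr0_norm ?divr_gt0 //; lra.
have K16' : `|K / 4 / 4| < `|K / 4| by rewrite !gtr0_norm ?divr_gt0 //; lra.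
have [] // := @pseries_snd_diffs R c (K / 4 / 4) 0 (is_cvg_pseries_inside cK K16)
  (is_cvg_pseries_inside dK K16') ddK.
by rewrite normr0 normr_gt0 lt0r_neq0 // !divr_gt0.
Qed.

Lemma analytic_derivable (I : set R) (f : R -> R) x0 :
  open I -> analytic_on I f -> I x0 -> derivable f x0 1.
Proof.
move=> oI fa Ix0; have [r [r0 [c fc]]] := fa x0 Ix0.
have /nbhs_ballP[e /= e0 eI] := oI x0 Ix0.
have near_f : \forall x \near x0, f x = limn (pseries c (x - x0)).
  near=> x; apply/esym/cvg_lim => //; rewrite /pseries seriesEnat; apply: fc.
  - by apply: eI; near: x; exact: nbhsx_ballx.
  - by rewrite distrC; near: x; exact: nbhsx_ballx.
pose m := Num.min r e; have m0 : 0 < m by rewrite lt_min r0.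
have [mr me] : m <= r /\ m <= e by rewrite !ge_min !lexx orbT.
pose K := m / 2; have [K0 Kr Ke] : [/\ 0 < K, K < r & K < e] by rewrite /K; split; lra.
have cK : cvgn (pseries c K).
  apply/cvg_ex; exists (f (x0 + K)); rewrite /pseries seriesEnat.
  have := fc (x0 + K); rewrite [x0 + K - x0]addrC addKr gtr0_norm //; apply => //.
  by apply: eI; rewrite /ball /= opprD addrA subrr sub0r normrN gtr0_norm.
have shift : is_derive x0 1 (fun x => x - x0) 1.
  by apply: is_derive_eq (is_deriveB (is_derive_id x0 1) (is_derive_cst x0 x0 1)) _;
    rewrite subr0.
have := is_derive1_comp shift; rewrite subrr.
move=> /(_ _ _ (derivableP (pseries_derivable0 K0 cK))) [dg _].
by apply: near_eq_derivable dg; move: near_f; apply: filterS => x ->.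
Unshelve. all: by end_near.
Qed.

End AnalyticDerivable.

Section OrthogonalFrame.
Variable R : realType.
Notation vec := 'cV[R]_3.

Lemma is_derive_dotp_self (u : R -> vec) x du :
  is_derive_cv u x du -> is_derive x 1 (fun y => dotp (u y) (u y)) (2 * dotp du (u x)).
Proof.
move=> ud; apply: is_derive_eq (is_derive_dotp ud ud) _.
by rewrite [dotp (u x) _]dotpC mulr_natl mulr2n.
Qed.

Lemma orthmx_mulmx_speed (I : set R) (M : R -> 'M[R]_3) (w : R -> vec) th dw :
  open I -> I th -> (forall p, I p -> (M p)^T *m M p = 1%:M) ->
  (forall i j, derivable (fun p => M p i j) th 1) -> is_derive_cv w th dw ->
  let u p := M p *m w p in
  is_derive_cv u th (derive1 u th) /\ dotp (derive1 u th) (u th) = dotp dw (w th).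
Proof.
move=> oI Ith Morth Md wd u.
have Md' i j :
    is_derive th 1 (fun p => M p i j) ((\matrix_(i, j) 'D_1 (fun p => M p i j) th) i j).
  by rewrite mxE; exact: derivableP.
have ud := is_derive_cv_mulmx Md' wd.
rewrite (derive1_cv ud); split => //.
have ww := is_derive_dotp_self wd.
have uu : is_derive th 1 (fun p => dotp (u p) (u p)) (2 * dotp dw (w th)).
  apply: near_eq_is_derive ww; near=> p.
  by rewrite /u dotp_orthmx // Morth //; near: p; exact: oI.
case: uu => _ uuE; case: (is_derive_dotp_self ud) => _; rewrite uuE.
by move/esym/(mulfI (_ : (2 : R) != 0)); apply; rewrite pnatr_eq0.
Unshelve. all: by end_near.
Qed.

End OrthogonalFrame.

Section StrictMonotonicity.
Variable R : realType.
Notation vec := 'cV[R]_3.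
Variable I : set R.
Hypothesis I_itv : forall x y z, I x -> I z -> x <= y -> y <= z -> I y.

Lemma const_sign_sgr (f : R -> R) a : a != 0 ->
  (forall x, I x -> Num.sg (f x) = Num.sg a) -> const_sign_on I f.
Proof.
move=> a0 fa; case: (ltrgt0P a) => [a_gt0|a_lt0|a_eq0]; last by rewrite a_eq0 eqxx in a0.
- by left=> x /fa; rewrite (gtr0_sg a_gt0) => /eqP; rewrite sgr_cp0.
- by right=> x /fa; rewrite (ltr0_sg a_lt0) => /eqP; rewrite sgr_cp0.
Qed.

Lemma const_sign_derive_strictly_monotonic (f df : R -> R) :
  (forall x, I x -> is_derive x 1 f (df x)) -> const_sign_on I df ->
  strictly_monotonic_on I f.
Proof.
move=> fd dfs.
have mvt x y : I x -> I y -> x < y -> exists2 c, I c & f y - f x = df c * (y - x).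
  move=> Ix Iy xy; have Ixy z : z \in `[x, y]%R -> I z.
    by rewrite in_itv /= => /andP[xz zy]; exact: I_itv xz zy.
  have fx z : z \in `[x, y]%R -> derivable f z 1 by move=> /Ixy/fd[].
  have [c cxy ->] := MVT xy (fun z zxy => fd z (Ixy z (subset_itv_oo_cc zxy)))
    (derivable_within_continuous fx).
  by exists c => //; exact/Ixy/subset_itv_oo_cc.
case: dfs => dfs; [left|right] => x y Ix Iy xy; have [c Ic fxy] := mvt x y Ix Iy xy.
- by rewrite -subr_gt0 fxy mulr_gt0 ?dfs ?subr_gt0.
- by rewrite -subr_lt0 fxy nmulr_rlt0 ?dfs ?subr_gt0.
Qed.

Lemma strictly_monotonic_sqrt (N : R -> R) : (forall x, I x -> 0 <= N x) ->
  strictly_monotonic_on I N -> strictly_monotonic_on I (fun x => Num.sqrt (N x)).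
Proof.
move=> N0; case=> Nmono; [left|right] => x y Ix Iy xy; have Nxy := Nmono x y Ix Iy xy.
- by rewrite ltr_sqrt // (le_lt_trans (N0 x Ix)).
- by rewrite ltr_sqrt // (le_lt_trans (N0 y Iy)).
Qed.

Lemma vnorm_strictly_monotonic (u : R -> vec) :
  (forall x, I x -> is_derive_cv u x (derive1 u x)) ->
  const_sign_on I (fun x => dotp (derive1 u x) (u x)) ->
  strictly_monotonic_on I (fun x => vnorm (u x)).
Proof.
move=> ud speed; apply: strictly_monotonic_sqrt => [x _|]; first exact: dotp_ge0.
apply: const_sign_derive_strictly_monotonic => [x Ix|].
  exact: is_derive_dotp_self (ud x Ix).
by case: speed => s; [left|right] => x /s; rewrite ?pmulr_rgt0 ?pmulr_rlt0.
Qed.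

End StrictMonotonicity.

Section MovingFrame.
Variables (R : realType) (I : set R) (M : R -> 'M[R]_3).
Hypotheses (I_open : open I) (I_itv : forall x y z, I x -> I z -> x <= y -> y <= z -> I y).
Hypotheses (M_analytic : mx_analytic_on I M) (M_orth : forall p, I p -> (M p)^T *m M p = 1%:M).

Lemma orthmx_frame_speed_sgr (w : R -> 'cV[R]_3) (a : R) : a != 0 ->
  (forall th, I th -> exists2 dw, is_derive_cv w th dw & Num.sg (dotp dw (w th)) = Num.sg a) ->
  let u p := M p *m w p in
  const_sign_on I (fun th => dotp (derive1 u th) (u th)) /\
  strictly_monotonic_on I (fun th => vnorm (u th)).
Proof.
move=> a0 w_speed u.
have u_speed th : I th ->
    is_derive_cv u th (derive1 u th) /\ Num.sg (dotp (derive1 u th) (u th)) = Num.sg a.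
  move=> Ith; have [dw wd <-] := w_speed th Ith.
  have Md i j := analytic_derivable I_open (M_analytic i j) Ith.
  by have [ud ->] := orthmx_mulmx_speed I_open Ith M_orth Md wd.
have u_sign : const_sign_on I (fun th => dotp (derive1 u th) (u th)).
  by apply: const_sign_sgr a0 _ => th /u_speed[].
by split=> //; apply: (vnorm_strictly_monotonic (u := u) I_itv _ u_sign) => th /u_speed[].
Qed.

End MovingFrame.

Lemma sgr_of_mulr_eq (R : realDomainType) (x a y : R) : a != 0 ->
  x * a = y -> Num.sg x = Num.sg y * Num.sg a.
Proof.
by move=> a0 <-; rewrite sgrM -mulrA -expr2 sqr_sg a0 mulr1.
Qed.

Section Mechanism.
Variables (R : realType) (t1r t2r t3r t4r : 'cV[R]_3).
Hypotheses (t1r_neq0 : dotp t1r t1r != 0) (t4r_neq0 : dotp t4r t4r != 0).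
Local Notation t2d := (t2d t1r t2r).
Local Notation t3d := (t3d t3r t4r).

Lemma t1_sub_t3d_speed (th : R) : exists2 dw, is_derive_cv (fun p => t1r - t3d p) th dw &
  dotp dw (t1r - t3d th) = (vnorm t4r)^-1 * triple (t3d th) t4r t1r.
Proof.
exists (0 - (vnorm t4r)^-1 *: crossp t4r (t3d th)).
  exact: is_derive_cvB (is_derive_cv_cst _ _) (is_derive_cv_rotR _ _ t4r_neq0).
by rewrite sub0r dotpNl dotpZl dotpE tripleE !coordE; ring.
Qed.

Lemma t2d_sub_t4_speed (g : R -> R) (th dg : R) : is_derive th 1 g dg ->
  exists2 dw, is_derive_cv (fun p => t2d (g p) - t4r) th dw &
  dotp dw (t2d (g th) - t4r) = - (dg * (vnorm t1r)^-1) * triple t4r t1r (t2d (g th)).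
Proof.
move=> gd; exists (dg *: ((vnorm t1r)^-1 *: crossp t1r (t2d (g th))) - 0).
  exact: is_derive_cvB (is_derive_cv_comp gd (is_derive_cv_rotR _ _ t1r_neq0))
    (is_derive_cv_cst _ _).
by rewrite subr0 !dotpZl dotpE tripleE !coordE; ring.
Qed.

Lemma constraint_derive (g : R -> R) (th dg : R) : is_derive th 1 g dg ->
  (\forall p \near th, dotp (t2d (g p)) (t3d p) = dotp t2r t3r) ->
  dg * (vnorm t1r)^-1 * triple t1r (t2d (g th)) (t3d th) =
  (vnorm t4r)^-1 * triple (t2d (g th)) (t3d th) t4r.
Proof.
move=> gd constr.
have [_] := is_derive_dotp (is_derive_cv_comp gd (is_derive_cv_rotR t2r _ t1r_neq0))
  (is_derive_cv_rotR t3r th t4r_neq0).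
have [_ ->] := near_eq_is_derive (filterS (fun _ => esym) constr)
  (is_derive_cst (dotp t2r t3r) th 1).
move/eqP; rewrite eq_sym addr_eq0 => /eqP.
by rewrite /comp /t2d /t3d !dotpE !tripleE !coordE => h; lra.
Qed.

Lemma t1_sub_t3d_speed_sgr (g : R -> R) th :
  sign_pattern t1r (t2d (g th)) (t3d th) t4r = sign_pattern t1r t2r t3r t4r ->
  exists2 dw, is_derive_cv (fun p => t1r - t3d p) th dw &
  Num.sg (dotp dw (t1r - t3d th)) = Num.sg ((vnorm t4r)^-1 * triple t3r t4r t1r).
Proof.
case=> _ _ s341 _; have [dw wd speed] := t1_sub_t3d_speed th.
by exists dw => //; rewrite speed !sgrM s341.
Qed.

Lemma t2d_sub_t4_speed_sgr (g : R -> R) (th dg : R) : triple t1r t2r t3r != 0 ->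
  is_derive th 1 g dg ->
  (\forall p \near th, dotp (t2d (g p)) (t3d p) = dotp t2r t3r) ->
  sign_pattern t1r (t2d (g th)) (t3d th) t4r = sign_pattern t1r t2r t3r t4r ->
  exists2 dw, is_derive_cv (fun p => t2d (g p) - t4r) th dw &
  Num.sg (dotp dw (t2d (g th) - t4r)) =
  Num.sg (- (triple t2r t3r t4r * triple t1r t2r t3r * triple t4r t1r t2r)).
Proof.
move=> h123 gd constr [s123 s234 _ s412].
have A0 : triple t1r (t2d (g th)) (t3d th) != 0 by rewrite -sgr_eq0 s123 sgr_eq0.
have k4_gt0 : 0 < (vnorm t4r)^-1 by rewrite invr_gt0 vnorm_gt0.
have [dw wd speed] := t2d_sub_t4_speed gd; exists dw => //.
rewrite speed sgrM sgrN (sgr_of_mulr_eq A0 (constraint_derive gd constr)).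
by rewrite sgrM (gtr0_sg k4_gt0) s123 s234 s412 sgrN !sgrM mul1r mulNr.
Qed.

End Mechanism.

Unset Implicit Arguments.

Theorem mainTheorem5 (R : realType) (t1r t2r t3r t4r : 'cV[R]_3)
  (I : set R) (gamma : R -> R) (R0 : R -> 'M[R]_3) :
  triple t1r t2r t3r != 0 -> triple t2r t3r t4r != 0 ->
  triple t3r t4r t1r != 0 -> triple t4r t1r t2r != 0 ->
  conv3 0 t1r t2r `&` conv3 0 t3r t4r = [set 0] ->
  conv3 0 t1r t4r `&` conv3 0 t2r t3r = [set 0] ->
  dotp (t1r - t3r) e3 = 0 -> dotp (t2r - t4r) e3 = 0 ->
  0 < dotp e3 (crossp (t1r - t3r) (t2r - t4r)) ->
  maximal_interval t1r t2r t3r t4r I ->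
  admissible t1r t2r t3r t4r I gamma ->
  mx_analytic_on I R0 -> (forall th, I th -> isSO3 (R0 th)) -> R0 0 = 1%:M ->
  let t1 th := R0 th *m t1r in
  let t2 th := R0 th *m t2d t1r t2r (gamma th) in
  let t3 th := R0 th *m t3d t3r t4r th in
  let t4 th := R0 th *m t4r in
  let u th := t1 th - t3 th in
  let v th := t2 th - t4 th in
  (forall th, I th ->
     dotp e3 (u th) = 0 /\ dotp e3 (v th) = 0 /\ 0 < dotp e3 (crossp (u th) (v th))) ->
  const_sign_on I (fun th => dotp (derive1 u th) (u th)) /\
  const_sign_on I (fun th => dotp (derive1 v th) (v th)) /\
  strictly_monotonic_on I (fun th => vnorm (u th)) /\
  strictly_monotonic_on I (fun th => vnorm (v th)).
Proof.
move=> h123 h234 h341 h412 _ _ _ _ _ [[oI [_ I_itv]] _] [[gd _] [_ g_adm]] R0a R0SO _.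
move=> t1 t2 t3 t4 u v _.
have [[_ _ t4n] [_ t1n _]] := (triple_neq0 h234, triple_neq0 h412).
have R0orth th : I th -> (R0 th)^T *m R0 th = 1%:M by case/R0SO.
have frame := orthmx_frame_speed_sgr oI I_itv R0a R0orth.
have -> : u = (fun p => R0 p *m (t1r - t3d t3r t4r p)).
  by apply/funext => p; rewrite /u /t1 /t3 mulmxBr.
have -> : v = (fun p => R0 p *m (t2d t1r t2r (gamma p) - t4r)).
  by apply/funext => p; rewrite /v /t2 /t4 mulmxBr.
have speed_u th : I th -> _ := fun Ith => t1_sub_t3d_speed_sgr t4n (g_adm th Ith).2.
have constr th : I th ->
    \forall p \near th, dotp (t2d t1r t2r (gamma p)) (t3d t3r t4r p) = dotp t2r t3r.
  by move=> Ith; near=> p; apply: (g_adm p _).1; near: p; exact: oI.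
have speed_v th : I th -> _ := fun Ith => t2d_sub_t4_speed_sgr t1n t4n h123
  (derivableP (gd th Ith)) (constr th Ith) (g_adm th Ith).2.
have [|cs_u mono_u] := frame _ _ _ speed_u.
  by rewrite mulf_neq0 // invr_eq0 gt_eqF // vnorm_gt0.
have [|cs_v mono_v] := frame _ _ _ speed_v; first by rewrite oppr_eq0 !mulf_neq0.
by [].
Unshelve. all: by end_near.
Qed.
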